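(* Let $s\in\mathbb{R}^2$ with $|s|=1$, $m=s^\perp$, and let $F,G\in\mathcal{M}_s$ with $F=R(\mathbb{I}+\gamma s\otimes m)$, $G=Q(\mathbb{I}+\zeta s\otimes m)$, where $R,Q\in SO(2)$ and $\gamma,\zeta\in\mathbb{R}$. Then $\operatorname{rank}(F-G)=1$ if and only if one of the following holds: (i) $R=Q$ and $\gamma\neq\zeta$; or (ii) $R\neq Q$ and $\gamma-\zeta=2\tan(\theta/2)$, where $\theta\in(-\pi,\pi)$ is the rotation angle of $Q^TR$, i.e. $Q^TRe_1=\cos\theta\, e_1+\sin\theta\, e_2$. Moreover, in case (i), $F-G=(\gamma-\zeta)Rs\otimes m$, and in case (ii), $$F-G=\frac{\gamma-\zeta}{4+(\gamma-\zeta)^2}\,Q\big((\zeta-\gamma)s+2m\big)\otimes\big(2s+(\gamma+\zeta)m\big).$$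
   Context: $m=s^\perp=(-s_2,s_1)$; $\mathcal{M}_s=\{F\in\mathbb{R}^{2\times2}:\det F=1,|Fs|=1\}=\{R(\mathbb{I}+\gamma s\otimes m):R\in SO(2),\gamma\in\mathbb{R}\}$; $a\otimes b=ab^T$. *)

From HB Require Import structures.
From mathcomp Require Import all_boot all_order all_algebra.
From mathcomp Require Import reals trigo.
Set Implicit Arguments. Unset Strict Implicit. Unset Printing Implicit Defensive.
Import Order.TTheory GRing.Theory Num.Theory.
Local Open Scope ring_scope.

Definition vec2 {R : ringType} (x y : R) : 'cV[R]_2 :=
  \col_(i < 2) (if i == 0 then x else y).

Definition perp {R : ringType} (s : 'cV[R]_2) : 'cV[R]_2 :=
  vec2 (- s 1 0) (s 0 0).

Definition tens {R : ringType} (a b : 'cV[R]_2) : 'M[R]_2 := a *m b^T.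

Definition e1 {R : ringType} : 'cV[R]_2 := vec2 1 0.
Definition e2 {R : ringType} : 'cV[R]_2 := vec2 0 1.

Definition unit_vec {R : ringType} (s : 'cV[R]_2) : Prop :=
  s 0 0 ^+ 2 + s 1 0 ^+ 2 = 1.

Definition SO2 {R : comUnitRingType} (Q : 'M[R]_2) : Prop :=
  Q^T *m Q = 1%:M /\ \det Q = 1.

From HB Require Import structures.
From mathcomp Require Import all_boot all_order all_algebra.
From mathcomp Require Import reals trigo.
From mathcomp Require Import ring lra.
Set Implicit Arguments. Unset Strict Implicit. Unset Printing Implicit Defensive.
Import Order.TTheory GRing.Theory Num.Theory.
Local Open Scope ring_scope.

(* Put P := Q^T R, the rotation by theta, and let B be the rotation with
   columns s and m.  Then s (x) m = B (e1 (x) e2) B^T and P commutes with B, so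
   F - G = Q B K B^T with K = P (I + gamma e1 (x) e2) - (I + zeta e1 (x) e2),
   and rank (F - G) = rank K.  K vanishes only if P = I and gamma = zeta, and
   with T = tan (theta / 2) the half-angle substitution gives
   det K = 2 - 2 cos theta - (gamma - zeta) sin theta
         = 2 T (2 T - (gamma - zeta)) / (1 + T^2),
   which vanishes iff theta = 0 or gamma - zeta = 2 T.  The same substitution
   exhibits K as the rank-one tensor of the statement. *)

Ltac entrywise := apply/matrixP => [[[|[|?]]] ?] [[|[|?]] ?] //;
  rewrite !(mxE, big_ord_recr, big_ord0) /=.

Section TwoByTwo.
Variable R : comNzRingType.
Implicit Types (a b c d : R) (M : 'M[R]_2).

Definition mx2 a b c d : 'M[R]_2 :=
  \matrix_(i < 2, j < 2)
    if i == 0 then (if j == 0 then a else b) else (if j == 0 then c else d).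

Definition rot2 c d := mx2 c (- d) d c.

Definition frame (s : 'cV[R]_2) := rot2 (s 0 0) (s 1 0).

Lemma mx2_eta M : M = mx2 (M 0 0) (M 0 1) (M 1 0) (M 1 1).
Proof. by entrywise; congr (M _ _); exact: val_inj. Qed.

Lemma vec2_eta (v : 'cV[R]_2) : v = vec2 (v 0 0) (v 1 0).
Proof.
apply/matrixP => i j; case: i => [[|[|i]] Hi] //; rewrite (ord1 j) !mxE /=;
  congr (v _ _); exact: val_inj.
Qed.

Lemma mx2_eq0 a b c d : (mx2 a b c d == 0) = [&& a == 0, b == 0, c == 0 & d == 0].
Proof.
apply/eqP/and4P => [/matrixP h | [/eqP-> /eqP-> /eqP-> /eqP->]]; last by entrywise.
by split; apply/eqP; [move: (h 0 0)|move: (h 0 1)|move: (h 1 0)|move: (h 1 1)];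
  rewrite !mxE.
Qed.

Lemma det_mx2 a b c d : \det (mx2 a b c d) = a * d - b * c.
Proof.
rewrite (expand_det_row _ 0) !big_ord_recr big_ord0 /= /cofactor !det_mx11 !mxE /=.
by rewrite add0n expr0 add0n expr1; ring.
Qed.

Lemma vec2_eq a b a' b' : vec2 a b = vec2 a' b' <-> a = a' /\ b = b'.
Proof.
split => [/matrixP h | [-> ->] //].
by split; [move: (h 0 0)|move: (h 1 0)]; rewrite !mxE.
Qed.

Lemma scale_e1_e2 a b : a *: e1 + b *: e2 = vec2 a b.
Proof. by entrywise; ring. Qed.

Lemma rot2_e1 c d : rot2 c d *m e1 = vec2 c d.
Proof. by entrywise; ring. Qed.

Lemma rot2_eq1 c d : rot2 c d = 1%:M <-> c = 1 /\ d = 0.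
Proof.
split => [/matrixP h | [-> ->]]; last by entrywise; ring.
by split; [move: (h 0 0)|move: (h 1 0)]; rewrite !mxE.
Qed.

Lemma rot2C a b c d : rot2 a b *m rot2 c d = rot2 c d *m rot2 a b.
Proof. by entrywise; ring. Qed.

Lemma frame_vec2 (s : 'cV[R]_2) u v : frame s *m vec2 u v = u *: s + v *: perp s.
Proof. by rewrite [s]vec2_eta; move: (s 0 0) (s 1 0) => a b; entrywise; ring. Qed.

Lemma tens_perp_frame (s : 'cV[R]_2) : tens s (perp s) = frame s *m delta_mx 0 1 *m (frame s)^T.
Proof. by rewrite [s]vec2_eta; move: (s 0 0) (s 1 0) => a b; entrywise; ring. Qed.

Lemma mulmx_tens (A B : 'M[R]_2) (u w : 'cV[R]_2) :
  A *m tens u w *m B^T = tens (A *m u) (B *m w).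
Proof. by rewrite /tens trmx_mul !mulmxA. Qed.

End TwoByTwo.

Section Conjugation.
Variables (R : comNzRingType) (n : nat).
Implicit Types (B E P Q : 'M[R]_n.+1) (g z : R).

Lemma conj_add1_scale B E g : B *m B^T = 1%:M ->
  1%:M + g *: (B *m E *m B^T) = B *m (1%:M + g *: E) *m B^T.
Proof. by move=> BBt; rewrite mulmxDr mulmx1 -scalemxAr mulmxDl BBt -scalemxAl. Qed.

Lemma conj_diff_add1_scale B E P Q g z : B *m B^T = 1%:M -> P *m B = B *m P ->
  Q *m P *m (1%:M + g *: (B *m E *m B^T)) - Q *m (1%:M + z *: (B *m E *m B^T))
  = Q *m B *m (P *m (1%:M + g *: E) - (1%:M + z *: E)) *m B^T.
Proof.
move=> BBt PB; rewrite !conj_add1_scale // mulmxBr mulmxBl !mulmxA.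
by rewrite -(mulmxA Q P B) PB !mulmxA.
Qed.

End Conjugation.

Section Rank.
Variable F : fieldType.

Lemma mxrank2_eq1 (D : 'M[F]_2) : \rank D = 1%N <-> D != 0 /\ \det D = 0.
Proof.
have unitD : (D \in unitmx) = (\det D != 0) by rewrite unitmxE unitfE.
split=> [r1 | [D0 /eqP dD]].
  split; first by rewrite -mxrank_eq0 r1.
  by apply/eqP; rewrite -[_ == 0]negbK -unitD; apply/negP => /mxrank_unit; rewrite r1.
have : ~~ row_free D by rewrite row_free_unit unitD dD.
rewrite /row_free -mxrank_eq0 in D0 *.
by case: (\rank D) D0 (rank_leq_row D) => [|[|[|]]].
Qed.

Lemma mxrank_mul_unit n (U A V : 'M[F]_n) :
  U \in unitmx -> V \in unitmx -> \rank (U *m A *m V) = \rank A.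
Proof. by move=> uU uV; rewrite mxrankMfree ?row_free_unit // eqmxMfull ?row_full_unit. Qed.

End Rank.

Section SpecialOrthogonal.
Variable R : comUnitRingType.
Implicit Types P Q : 'M[R]_2.

Lemma SO2_unit Q : SO2 Q -> Q \in unitmx.
Proof. by case=> _ dQ; rewrite unitmxE dQ unitr1. Qed.

Lemma SO2_mulmxT Q : SO2 Q -> Q *m Q^T = 1%:M.
Proof. by case=> /mulmx1C. Qed.

Lemma SO2_tr Q : SO2 Q -> SO2 Q^T.
Proof. by move=> SQ; split; [rewrite trmxK SO2_mulmxT | rewrite det_tr; case: SQ]. Qed.

Lemma SO2M P Q : SO2 P -> SO2 Q -> SO2 (P *m Q).
Proof.
case=> TP dP [TQ dQ]; split; last by rewrite det_mulmx dP dQ mulr1.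
by rewrite trmx_mul mulmxA -(mulmxA Q^T) TP mulmx1 TQ.
Qed.

Lemma SO2_rot2 Q : SO2 Q -> exists c d, Q = rot2 c d /\ c ^+ 2 + d ^+ 2 = 1.
Proof.
case=> TQ dQ.
have /matrixP adjQ : Q^T = \adj Q.
  by rewrite -[Q^T]mulmx1 -dQ -mul_mx_adj mulmxA TQ mul1mx.
have l10 : lift 1 0 = 0 :> 'I_2 by apply: val_inj.
have l00 : lift 0 0 = 1 :> 'I_2 by apply: val_inj.
have := adjQ 1 1; have := adjQ 0 1.
rewrite !mxE /cofactor !det_mx11 !mxE l10 l00 addn0 expr1 mulN1r -signr_odd expr0 mul1r.
move=> Q10 Q11.
have EQ : Q = rot2 (Q 0 0) (Q 1 0) by rewrite [LHS]mx2_eta Q11 Q10 /rot2 opprK.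
exists (Q 0 0), (Q 1 0); split=> //; move: TQ; rewrite EQ; move: (Q 0 0) (Q 1 0) => c d.
by move/matrixP/(_ 0 0); rewrite !(mxE, big_ord_recr, big_ord0) /= add0r -!expr2.
Qed.

Lemma frame_SO2 (s : 'cV[R]_2) : unit_vec s -> SO2 (frame s).
Proof.
rewrite /unit_vec => s1; split; last by rewrite det_mx2 -s1; ring.
by entrywise; rewrite -s1; ring.
Qed.

End SpecialOrthogonal.

Section HalfAngle.
Variable R : realType.
Implicit Types (t x y d : R).

Lemma cos_half_gt0 t : - pi < t -> t < pi -> 0 < cos (t / 2).
Proof. by move=> ? ?; apply: cos_gt0_pihalf; apply/andP; split; lra. Qed.

Lemma cos_tan_half t : cos (t / 2) != 0 ->
  cos t = (1 - tan (t / 2) ^+ 2) / (1 + tan (t / 2) ^+ 2).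
Proof.
move=> c0; have tD : t = t / 2 + t / 2 by field.
by rewrite -cos2_tan2 // {1}tD cosD /tan; field.
Qed.

Lemma sin_tan_half t : cos (t / 2) != 0 ->
  sin t = 2 * tan (t / 2) / (1 + tan (t / 2) ^+ 2).
Proof.
move=> c0; have tD : t = t / 2 + t / 2 by field.
by rewrite -cos2_tan2 // {1}tD sinD /tan; field.
Qed.

Lemma tan_half_double_atan t : tan (2 * atan t / 2) = t.
Proof. by rewrite mulrC mulKf ?atanK ?pnatr_eq0. Qed.

Lemma unit_circle_angle x y : x ^+ 2 + y ^+ 2 = 1 -> x != -1 ->
  exists t, [/\ - pi < t, t < pi, cos t = x & sin t = y].
Proof.
move=> xy1 xN1.
have x1 : 0 < 1 + x.
  have : -1 <= x by have := sqr_ge0 y; nra.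
  by rewrite le_eqVlt eq_sym (negbTE xN1) /=; lra.
have [/andP [a1 a2] _] := atan_def (y / (1 + x)).
have c0 : cos (2 * atan (y / (1 + x)) / 2) != 0.
  by rewrite gt_eqF // cos_half_gt0 //; lra.
have y2 : y ^+ 2 = 1 - x ^+ 2 by lra.
have x10 : 1 + x != 0 by rewrite gt_eqF.
(* invert the half-angle substitution: tan (t / 2) = y / (1 + x) *)
exists (2 * atan (y / (1 + x))); split; try lra.
- rewrite cos_tan_half // tan_half_double_atan expr_div_n y2.
  by field; rewrite x10 gt_eqF //; nra.
- rewrite sin_tan_half // tan_half_double_atan expr_div_n y2.
  by field; rewrite x10 gt_eqF //; nra.
Qed.

Lemma tan_half_factor t d : cos (t / 2) != 0 ->
  2 - 2 * cos t - d * sin t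
  = 2 * tan (t / 2) * (2 * tan (t / 2) - d) / (1 + tan (t / 2) ^+ 2).
Proof.
move=> c0; rewrite cos_tan_half // sin_tan_half //.
have : 0 < 1 + tan (t / 2) ^+ 2 by rewrite ltr_pwDl // sqr_ge0.
by move: (tan (t / 2)) => T /lt0r_neq0 T0; field.
Qed.

Lemma unit_circle_tan_half x y d : x ^+ 2 + y ^+ 2 = 1 -> ~ (x = 1 /\ y = 0) ->
  2 - 2 * x - d * y = 0 <->
  exists t, [/\ - pi < t, t < pi, cos t = x, sin t = y & d = 2 * tan (t / 2)].
Proof.
move=> xy1 xy10; split => [det0 | [t [t1 t2 <- <- ->]]]; last first.
  by rewrite tan_half_factor ?gt_eqF ?cos_half_gt0 // subrr mulr0 mul0r.
have xN1 : x != -1.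
  apply/eqP => x1; have /eqP : y ^+ 2 = 0 by rewrite x1 in xy1; lra.
  by rewrite sqrf_eq0 => /eqP y0; move: det0; rewrite x1 y0; lra.
have [t [t1 t2 ct st]] := unit_circle_angle xy1 xN1.
have c0 : cos (t / 2) != 0 by rewrite gt_eqF ?cos_half_gt0.
have T0 : tan (t / 2) != 0.
  apply/eqP => T0; apply: xy10.
  by rewrite -ct -st cos_tan_half // sin_tan_half // T0; split; field.
have pos : 0 < 1 + tan (t / 2) ^+ 2 by rewrite ltr_pwDl // sqr_ge0.
exists t; split => //; move/eqP: det0.
rewrite -ct -st tan_half_factor // mulf_eq0 invr_eq0 (gt_eqF pos) orbF.
by rewrite mulf_eq0 (mulf_eq0 2) pnatr_eq0 (negbTE T0) /= subr_eq0 => /eqP <-.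
Qed.

End HalfAngle.

Section ShearDifference.
Variable R : realType.
Implicit Types (Q Rm : 'M[R]_2) (g z x y t : R).

Lemma SO2_mulTmx_eq1 Q Rm : SO2 Q -> (Q^T *m Rm == 1%:M) = (Rm == Q).
Proof.
move=> SQ; apply/eqP/eqP => [PQ | ->]; last by case: SQ.
by rewrite -[Rm]mul1mx -(SO2_mulmxT SQ) -mulmxA PQ mulmx1.
Qed.

Lemma rot2_shear_diff x y g z :
  rot2 x y *m (1%:M + g *: delta_mx 0 1) - (1%:M + z *: delta_mx 0 1)
  = mx2 (x - 1) (g * x - y - z) y (g * y + x - 1).
Proof. by entrywise; ring. Qed.

Lemma rank_shear_diff Q Rm g z : SO2 Q -> SO2 Rm ->
  (\rank (Q^T *m Rm *m (1%:M + g *: delta_mx 0 1) - (1%:M + z *: delta_mx 0 1))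
     = 1%N) <->
  ((Rm = Q /\ g != z) \/
   (Rm != Q /\ exists theta : R,
       [/\ - pi < theta, theta < pi,
           Q^T *m Rm *m e1 = cos theta *: e1 + sin theta *: e2
         & g - z = 2 * tan (theta / 2)])).
Proof.
move=> SQ SRm; have [x [y [EP xy1]]] := SO2_rot2 (SO2M (SO2_tr SQ) SRm).
rewrite EP rot2_shear_diff rot2_e1 mxrank2_eq1.
have [RQ | nRQ] := eqVneq Rm Q.
  have /rot2_eq1 [-> ->] : rot2 x y = 1%:M by rewrite -EP RQ; case: SQ.
  rewrite (_ : mx2 _ _ _ _ = mx2 0 (g - z) 0 0); last by congr mx2; ring.
  rewrite mx2_eq0 det_mx2 eqxx subr_eq0 mul0r mulr0 subrr /= andbT.
  by split => [[gz _] | [[_ gz] | []]] //; left.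
have xy10 : ~ (x = 1 /\ y = 0).
  move=> [x1 y0]; move/eqP: nRQ; apply; apply/eqP.
  by rewrite -SO2_mulTmx_eq1 // EP x1 y0; apply/eqP/rot2_eq1.
have K0 : mx2 (x - 1) (g * x - y - z) y (g * y + x - 1) != 0.
  rewrite mx2_eq0; apply/negP => /and4P [/eqP x1 _ /eqP y0 _].
  by apply: xy10; split; lra.
rewrite det_mx2 (_ : _ * _ - _ * _ = 2 - 2 * x - (g - z) * y); last by nra.
split => [[_ /(unit_circle_tan_half _ xy1 xy10) [t [t1 t2 ct st gz]]] | ].
  by right; split => //; exists t; rewrite scale_e1_e2 ct st.
case=> [[RQ _] | [_ [t [t1 t2 /[!scale_e1_e2] /vec2_eq [xc ys] gz]]]].
  by move/eqP: nRQ.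
by split => //; apply/(unit_circle_tan_half _ xy1 xy10); exists t; rewrite xc ys.
Qed.

Lemma shear_diff_factor Q Rm g z t : SO2 Q -> SO2 Rm -> - pi < t -> t < pi ->
  Q^T *m Rm *m e1 = cos t *: e1 + sin t *: e2 -> g - z = 2 * tan (t / 2) ->
  Q^T *m Rm *m (1%:M + g *: delta_mx 0 1) - (1%:M + z *: delta_mx 0 1)
  = ((g - z) / (4 + (g - z) ^+ 2)) *: tens (vec2 (z - g) 2) (vec2 2 (g + z)).
Proof.
move=> SQ SRm t1 t2; have [x [y [-> _]]] := SO2_rot2 (SO2M (SO2_tr SQ) SRm).
rewrite rot2_e1 scale_e1_e2 rot2_shear_diff => /vec2_eq [-> ->] gz.
have c0 : cos (t / 2) != 0 by rewrite gt_eqF ?cos_half_gt0.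
have -> : g = z + 2 * tan (t / 2) by lra.
rewrite cos_tan_half // sin_tan_half //.
have : 0 < 1 + tan (t / 2) ^+ 2 by rewrite ltr_pwDl // sqr_ge0.
move: (tan (t / 2)) => T pos.
have -> : z + 2 * T - z = 2 * T by ring.
by entrywise; field; rewrite !gt_eqF //; nra.
Qed.

End ShearDifference.

Theorem lemma3p1 (R : realType) (s : 'cV[R]_2) (Rm Q : 'M[R]_2) (g z : R) :
  unit_vec s -> SO2 Rm -> SO2 Q ->
  let m := perp s in
  let F := Rm *m (1%:M + g *: tens s m) in
  let G := Q *m (1%:M + z *: tens s m) in
  ((\rank (F - G) = 1%N) <->
     ((Rm = Q /\ g != z) \/
      (Rm != Q /\ exists theta : R,
          [/\ - pi < theta, theta < pi,
              Q^T *m Rm *m e1 = cos theta *: e1 + sin theta *: e2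
            & g - z = 2 * tan (theta / 2)])))
  /\ (Rm = Q -> g != z -> F - G = (g - z) *: tens (Rm *m s) m)
  /\ (forall theta : R, Rm != Q -> - pi < theta -> theta < pi ->
        Q^T *m Rm *m e1 = cos theta *: e1 + sin theta *: e2 ->
        g - z = 2 * tan (theta / 2) ->
        F - G = ((g - z) / (4 + (g - z) ^+ 2)) *:
                  tens (Q *m ((z - g) *: s + 2 *: m)) (2 *: s + (g + z) *: m)).
Proof.
move=> s1 SRm SQ m F G.
have SB := frame_SO2 s1.
have [x [y [EP _]]] := SO2_rot2 (SO2M (SO2_tr SQ) SRm).
have FG : F - G = Q *m frame s *m
    (Q^T *m Rm *m (1%:M + g *: delta_mx 0 1) - (1%:M + z *: delta_mx 0 1)) *m
    (frame s)^T.
  rewrite -conj_diff_add1_scale ?SO2_mulmxT //; last by rewrite EP rot2C.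
  by rewrite -tens_perp_frame (mulmxA Q) SO2_mulmxT // mul1mx.
split; [|split].
- rewrite FG mxrank_mul_unit ?(SO2_unit (SO2M SQ SB)) ?(SO2_unit (SO2_tr SB)) //.
  exact: rank_shear_diff.
- move=> RQ _; rewrite /F /G RQ -mulmxBr opprD addrACA subrr add0r -scalerBl.
  by rewrite -scalemxAr /tens mulmxA.
- move=> t _ t1 t2 Pe1 gz.
  rewrite FG (shear_diff_factor SQ SRm t1 t2 Pe1 gz) -scalemxAr -scalemxAl mulmx_tens.
  by rewrite -mulmxA !frame_vec2.
Qed.
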